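(* Let $M$ be a finitely generated monoid and let $X$ be a finite generating set of $M \times M$. Then the class $\mathbb{F}(M)$ is closed under finite intersection if and only if there exists an $M$-automaton accepting the identity language $W_X(M \times M)$.
   Context: For a monoid $M$ with identity $1$ and a finite alphabet $\Sigma$, an $M$-automaton over $\Sigma$ is a finite directed graph whose edges are labelled by elements of $M \times (\Sigma \cup \{\epsilon\})$ (inside the monoid $M \times \Sigma^*$), with an initial vertex and a set of terminal vertices; a word $w \in \Sigma^*$ is accepted if some path from the initial vertex to a terminal vertex has label (product of edge labels) equal to $(1,w)$. $\mathbb{F}(M)$ denotes the family of all languages (over all finite alphabets) accepted by $M$-automata. If a monoid $N$ is generated by a finite set $X$, the identity language $W_X(N) \subseteq X^*$ is the set of all words over $X$ representing the identity of $N$. Closure under finite intersection means: if $L_1, L_2 \in \mathbb{F}(M)$ are languages over the same alphabet then $L_1 \cap L_2 \in \mathbb{F}(M)$. *)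

From mathcomp Require Import all_boot.
From Stdlib Require List.
Set Implicit Arguments. Unset Strict Implicit. Unset Printing Implicit Defensive.

Record monoidT := {
  mcarrier :> Type;
  mmul : mcarrier -> mcarrier -> mcarrier;
  mone : mcarrier;
  mmulA : forall x y z, mmul x (mmul y z) = mmul (mmul x y) z;
  mmul1l : forall x, mmul mone x = x;
  mmul1r : forall x, mmul x mone = x }.

Definition mprod (M : monoidT) (s : seq M) : M := foldr (@mmul M) (@mone M) s.

Definition finitely_generated (M : monoidT) : Prop :=
  exists gens : seq M, forall m : M,
    exists w : seq M, (forall g, List.In g w -> List.In g gens) /\ mprod w = m.

Definition mulMM (M : monoidT) (p q : M * M) : M * M :=
  (mmul p.1 q.1, mmul p.2 q.2).
Definition prodMM (M : monoidT) (s : seq (M * M)) : M * M :=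
  foldr (@mulMM M) (mone M, mone M) s.

(* An M-automaton over the finite alphabet S: a finite directed (multi)graph
   with edges labelled by M x (S u {eps}), initial vertex and terminal set. *)
Record automaton (M : monoidT) (S : finType) := {
  astate : finType;
  aedges : seq (astate * M * option S * astate);
  ainit : astate;
  afinal : pred astate }.

Definition edge_src M S (A : automaton M S) (e : astate A * M * option S * astate A) := e.1.1.1.
Definition edge_mon M S (A : automaton M S) (e : astate A * M * option S * astate A) := e.1.1.2.
Definition edge_let M S (A : automaton M S) (e : astate A * M * option S * astate A) := e.1.2.
Definition edge_tgt M S (A : automaton M S) (e : astate A * M * option S * astate A) := e.2.

Fixpoint is_path M S (A : automaton M S) (q : astate A)
  (p : seq (astate A * M * option S * astate A)) (q' : astate A) : Prop :=
  match p with
  | [::] => q = q'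
  | e :: p' => List.In e (aedges A) /\ edge_src e = q /\ is_path (edge_tgt e) p' q'
  end.

Definition accepts M S (A : automaton M S) (w : seq S) : Prop :=
  exists p q', @is_path M S A (ainit A) p q' /\ @afinal M S A q' /\
    mprod (map (@edge_mon M S A) p) = mone M /\
    pmap id (map (@edge_let M S A) p) = w.

Definition language (S : finType) := seq S -> Prop.

Definition in_FM (M : monoidT) (S : finType) (L : language S) : Prop :=
  exists A : automaton M S, forall w, L w <-> accepts A w.

Definition FM_closed_under_intersection (M : monoidT) : Prop :=
  forall (S : finType) (L1 L2 : language S),
    in_FM M L1 -> in_FM M L2 -> in_FM M (fun w => L1 w /\ L2 w).

Definition generates_MM (M : monoidT) (X : finType) (x : X -> M * M) : Prop :=
  injective x /\ forall p : M * M, exists w : seq X, prodMM (map x w) = p.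

Definition identity_language (M : monoidT) (X : finType) (x : X -> M * M) : language X :=
  fun w => prodMM (map x w) = (mone M, mone M).

From mathcomp Require Import all_boot.
From Stdlib Require List.
From Stdlib Require Import IndefiniteDescription.
Set Implicit Arguments. Unset Strict Implicit. Unset Printing Implicit Defensive.

(* An M1-automaton and an M2-automaton over the same alphabet combine into an
   automaton over M1 x M2 that runs them synchronously on letters and
   independently on epsilon-moves; it accepts the intersection of their
   languages.  If moreover an M-automaton B accepts the identity language of N
   for generators x, every N-automaton P is simulated by an M-automaton: an
   edge of P labelled n emits its letter with label 1 and then feeds B a fixed
   word over X spelling n, so a run of P has label 1 exactly when B accepts the
   concatenated word.  With N = M x M this gives closure under intersection.
   Conversely, W_X(M x M) is the intersection of the languages
   {w | pi_i(w) = 1}, each accepted by a one-state M-automaton. *)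

Definition ocons (T : Type) (o : option T) (s : seq T) : seq T :=
  if o is Some a then a :: s else s.

Lemma ocons_cat (T : Type) (o : option T) (s t : seq T) :
  ocons o s ++ t = ocons o (s ++ t).
Proof. by case: o. Qed.

Lemma mprod_cat (M : monoidT) (s t : seq M) :
  mprod (s ++ t) = mmul (mprod s) (mprod t).
Proof. by elim: s => [|a s IHs] /=; rewrite ?mmul1l ?IHs ?mmulA. Qed.

Lemma In_mem (T : eqType) (a : T) (s : seq T) : a \in s -> List.In a s.
Proof. by elim: s => [|b s IHs] //; rewrite inE => /orP[/eqP->|/IHs]; [left|right]. Qed.

Lemma In_enum (T : finType) (a : T) : List.In a (enum T).
Proof. exact/In_mem/mem_enum. Qed.

Lemma In_map (A B : Type) (f : A -> B) (s : seq A) (b : B) :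
  List.In b (map f s) <-> exists2 a, List.In a s & b = f a.
Proof.
elim: s => [|a s IHs] /=; first by split=> // -[].
rewrite IHs; split=> [[<-|[a' sa' ->]]|[a' [<-|sa'] ->]].
- by exists a; [left|].
- by exists a'; [right|].
- by left.
- by right; exists a'.
Qed.

Lemma In_filter (A : Type) (c : pred A) (s : seq A) (a : A) :
  List.In a (filter c s) <-> List.In a s /\ c a.
Proof.
elim: s => [|b s IHs] /=; first by split=> // -[].
case cb: (c b) => /=; rewrite IHs.
- by split=> [[<-|[]]|[[<-|]]]; auto.
- by split=> [[]|[[<-|]]]; auto; rewrite cb.
Qed.

Section ProductMonoid.
Variables M1 M2 : monoidT.

Definition mul_pair (p q : M1 * M2) : M1 * M2 := (mmul p.1 q.1, mmul p.2 q.2).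

Lemma mul_pairA : forall p q r, mul_pair p (mul_pair q r) = mul_pair (mul_pair p q) r.
Proof. by move=> p q r; rewrite /mul_pair /= !mmulA. Qed.

Lemma mul_pair1l : forall p, mul_pair (mone M1, mone M2) p = p.
Proof. by case=> a b; rewrite /mul_pair /= !mmul1l. Qed.

Lemma mul_pair1r : forall p, mul_pair p (mone M1, mone M2) = p.
Proof. by case=> a b; rewrite /mul_pair /= !mmul1r. Qed.

Definition prod_monoid : monoidT :=
  Build_monoidT mul_pairA mul_pair1l mul_pair1r.

Lemma mprod_pair (s : seq prod_monoid) :
  mprod s = (mprod (map fst s), mprod (map snd s)).
Proof. by elim: s => [|[a b] s IHs] //=; rewrite IHs. Qed.

Lemma mprod_pair_eq1 (s : seq prod_monoid) :
  mprod s = mone prod_monoid <->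
  mprod (map fst s) = mone M1 /\ mprod (map snd s) = mone M2.
Proof. by rewrite mprod_pair; split=> [[-> ->]|[-> ->]]. Qed.

End ProductMonoid.
Arguments mul_pair M1 M2 p q /.

Arguments edge_src {M S A} !e /.
Arguments edge_mon {M S A} !e /.
Arguments edge_let {M S A} !e /.
Arguments edge_tgt {M S A} !e /.

Inductive run (M : monoidT) (S : finType) (A : automaton M S) :
    astate A -> seq S -> M -> astate A -> Prop :=
  | run_nil q : @run M S A q [::] (mone M) q
  | run_step e w m q : List.In e (aedges A) -> @run M S A (edge_tgt e) w m q ->
      @run M S A (edge_src e) (ocons (edge_let e) w) (mmul (edge_mon e) m) q.
Arguments run {M S} A _ _ _ _.

Section Runs.
Variables (M : monoidT) (S : finType) (A : automaton M S).
Implicit Types (q : astate A) (w : seq S) (m : M).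

Lemma run_step_eq e q w w' m m' q' :
  List.In e (aedges A) -> edge_src e = q -> ocons (edge_let e) w = w' ->
  mmul (edge_mon e) m = m' -> run A (edge_tgt e) w m q' -> run A q w' m' q'.
Proof. by move=> Ae <- <- <-; apply: run_step. Qed.

Lemma run_cat q w m q1 w' m' q' :
  run A q w m q1 -> run A q1 w' m' q' -> run A q (w ++ w') (mmul m m') q'.
Proof.
elim=> [q0|e w0 m0 q0 Ae _ IH] run'; first by rewrite mmul1l.
by rewrite ocons_cat -mmulA; apply: run_step (IH run').
Qed.

Lemma run_split q s t m q' : run A q (s ++ t) m q' ->
  exists q1 m1 m2, [/\ run A q s m1 q1, run A q1 t m2 q' & m = mmul m1 m2].
Proof.
move Ew: (s ++ t) => w r; elim: r s Ew => [q0|e w0 m0 q0 Ae r IH] s Ew.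
  case: s Ew => // /= ->; exists q0, (mone M), (mone M).
  by rewrite mmul1l; split=> //; exact: run_nil.
case: s Ew => [|a s] /= Ew.
  exists (edge_src e), (mone M), (mmul (edge_mon e) m0); rewrite mmul1l Ew.
  by split=> //; [exact: run_nil|apply: run_step].
have [s' Es' Ew0] : exists2 s', a :: s = ocons (edge_let e) s' & w0 = s' ++ t.
  by case: (edge_let e) Ew => [b /= [-> <-]|/= <-]; [exists s|exists (a :: s)].
have [q1 [m1 [m2 [r1 r2 ->]]]] := IH _ (esym Ew0).
by exists q1, (mmul (edge_mon e) m1), m2; rewrite mmulA Es'; split=> //; apply: run_step.
Qed.

Lemma run_cons_inv q a w m q' : run A q (a :: w) m q' ->
  exists m0 e m1, [/\ run A q [::] m0 (edge_src e), List.In e (aedges A),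
    edge_let e = Some a, run A (edge_tgt e) w m1 q' & m = mmul m0 (mmul (edge_mon e) m1)].
Proof.
move Ew: (a :: w) => w' r; elim: r Ew => [//|e w0 m0 q0 Ae r IH].
case Ee: (edge_let e) => [b|] /= Ew.
  by case: Ew => -> ->; exists (mone M), e, m0; rewrite mmul1l; split=> //; exact: run_nil.
have [m1 [e' [m2 [r0 Ae' Ee' r' ->]]]] := IH Ew.
exists (mmul (edge_mon e) m1), e', m2; rewrite mmulA; split=> //.
by apply: run_step_eq r0; rewrite ?Ee.
Qed.

Lemma path_run q p q' : is_path q p q' ->
  run A q (pmap id (map (@edge_let M S A) p)) (mprod (map (@edge_mon M S A) p)) q'.
Proof.
elim: p q => [|e p IHp] q /=; first by move=> ->; exact: run_nil.
by case=> Ae [<- /IHp r]; apply: run_step_eq r => //; case: (edge_let e).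
Qed.

Lemma run_path q w m q' : run A q w m q' -> exists p, [/\ is_path q p q',
  pmap id (map (@edge_let M S A) p) = w & mprod (map (@edge_mon M S A) p) = m].
Proof.
elim=> [q0|e w0 m0 q0 Ae _ [p [Pp <- <-]]]; first by exists [::].
by exists (e :: p); split=> //=; case: (edge_let e).
Qed.

Lemma acceptsE w : accepts A w <-> exists2 q, afinal q & run A (ainit A) w (mone M) q.
Proof.
split=> [[p [q [/path_run r [fq [<- <-]]]]]|[q fq /run_path[p [Pp Ew Em]]]].
  by exists q.
by exists p, q.
Qed.

End Runs.

Section KernelAutomaton.
Variables (M : monoidT) (X : finType) (f : X -> M).

Definition kernel_automaton : automaton M X :=
  @Build_automaton M X unit [seq (tt, f a, Some a, tt) | a <- enum X] tt predT.

Lemma kernel_run w m : run kernel_automaton tt w m tt <-> m = mprod (map f w).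
Proof.
split.
  elim=> [//|e w0 m0 q /In_map[a _ ->] _ /= ->] //.
elim: w m => [|a w IHw] m ->; first exact: run_nil.
apply: (@run_step _ _ kernel_automaton (tt, f a, Some a, tt)); last exact: IHw.
by apply/In_map; exists a; first exact: In_enum.
Qed.

Lemma in_FM_kernel : in_FM M (fun w => mprod (map f w) = mone M).
Proof.
exists kernel_automaton => w; rewrite acceptsE.
by split=> [/esym/kernel_run|[[] _ /kernel_run/esym]] //; exists tt.
Qed.

End KernelAutomaton.

Section ProductAutomaton.
Variables (M1 M2 : monoidT) (S : finType) (A1 : automaton M1 S) (A2 : automaton M2 S).
Local Notation Q1 := (astate A1).
Local Notation Q2 := (astate A2).
Local Notation E1 := (Q1 * M1 * option S * Q1)%type.
Local Notation E2 := (Q2 * M2 * option S * Q2)%type.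
Local Notation E := ((Q1 * Q2) * prod_monoid M1 M2 * option S * (Q1 * Q2))%type.

Definition prod_stepl (c : E1 * Q2) : E :=
  let: (e1, q2) := c in
  ((edge_src e1, q2), (edge_mon e1, mone M2), None, (edge_tgt e1, q2)).

Definition prod_stepr (c : Q1 * E2) : E :=
  let: (q1, e2) := c in
  ((q1, edge_src e2), (mone M1, edge_mon e2), None, (q1, edge_tgt e2)).

Definition prod_steplr (c : E1 * E2) : E :=
  let: (e1, e2) := c in
  ((edge_src e1, edge_src e2), (edge_mon e1, edge_mon e2), edge_let e1,
   (edge_tgt e1, edge_tgt e2)).

Definition prod_edges : seq E :=
  [seq prod_stepl c | c <- List.list_prod (aedges A1) (enum Q2) & edge_let c.1 == None]
  ++ [seq prod_stepr c | c <- List.list_prod (enum Q1) (aedges A2) & edge_let c.2 == None]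
  ++ [seq prod_steplr c | c <- List.list_prod (aedges A1) (aedges A2)
                        & edge_let c.1 == edge_let c.2].

Definition prod_automaton : automaton (prod_monoid M1 M2) S :=
  @Build_automaton _ S (Q1 * Q2)%type prod_edges (ainit A1, ainit A2)
    (fun q => afinal q.1 && afinal q.2).

Lemma in_prod_edges e : List.In e prod_edges <->
  [\/ exists e1 q2, [/\ List.In e1 (aedges A1), edge_let e1 = None & e = prod_stepl (e1, q2)],
      exists q1 e2, [/\ List.In e2 (aedges A2), edge_let e2 = None & e = prod_stepr (q1, e2)]
    | exists e1 e2, [/\ List.In e1 (aedges A1), List.In e2 (aedges A2),
                        edge_let e1 = edge_let e2 & e = prod_steplr (e1, e2)]].
Proof.
rewrite !List.in_app_iff !In_map; split.
- case=> [|[]] [[a b] /In_filter[/List.in_prod_iff[Aa Ab] /eqP Eab] ->].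
  + by apply: Or31; exists a, b.
  + by apply: Or32; exists a, b.
  + by apply: Or33; exists a, b.
- case=> -[a [b]] => [[Aa Ea ->]|[Ab Eb ->]|[Aa Ab Eab ->]];
    [left|right; left|right; right]; exists (a, b) => //; apply/In_filter;
    rewrite /= ?Ea ?Eb ?Eab eqxx; split=> //; apply/List.in_prod_iff; split=> //; exact: In_enum.
Qed.

Lemma prod_run_sound q w m q' : run prod_automaton q w m q' ->
  run A1 q.1 w m.1 q'.1 /\ run A2 q.2 w m.2 q'.2.
Proof.
elim=> [q0|e w0 m0 q0 /in_prod_edges Ae _]; first by split; exact: run_nil.
case: Ae => -[a [b]] => [[Aa Ea ->]|[Ab Eb ->]|[Aa Ab Eab ->]] /= [r1 r2].
- by split; [apply: run_step_eq r1; rewrite ?Ea|rewrite mmul1l].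
- by split; [rewrite mmul1l|apply: run_step_eq r2; rewrite ?Eb].
- by split; [apply: run_step_eq r1|apply: run_step_eq r2; rewrite -?Eab].
Qed.

Lemma prod_run_epsr q1 q2 m2 q2' : run A2 q2 [::] m2 q2' ->
  run prod_automaton (q1, q2) [::] (mone M1, m2) (q1, q2').
Proof.
move Ew: [::] => w r; elim: r Ew => [q _|e w0 m0 q Ae _ IH]; first exact: run_nil.
case Ee: (edge_let e) => [//|] /= Ew0.
apply: (@run_step_eq _ _ prod_automaton (prod_stepr (q1, e))) (IH Ew0) => //=.
  by apply/in_prod_edges; apply: Or32; exists q1, e.
by rewrite mmul1l.
Qed.

Lemma prod_run_complete q1 q2 w m1 m2 q1' q2' :
  run A1 q1 w m1 q1' -> run A2 q2 w m2 q2' ->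
  run prod_automaton (q1, q2) w (m1, m2) (q1', q2').
Proof.
move=> r1; elim: r1 q2 m2 => [q|e1 w0 m0 q Ae1 _ IH] q2 m2 r2.
  exact: prod_run_epsr.
case Ee1: (edge_let e1) r2 => [a|] /= r2.
- have [m3 [e2 [m4 [r23 Ae2 Ee2 r4 ->]]]] := run_cons_inv r2.
  have step : run prod_automaton (edge_src e1, edge_src e2) (a :: w0)
      (mmul (edge_mon e1) m0, mmul (edge_mon e2) m4) (q, q2').
    apply: (@run_step_eq _ _ prod_automaton (prod_steplr (e1, e2))) (IH _ _ r4) => //=.
      by apply/in_prod_edges; apply: Or33; exists e1, e2; split=> //; rewrite Ee1 Ee2.
    by change (ocons (edge_let e1) w0 = a :: w0); rewrite Ee1.
  by have := run_cat (prod_run_epsr (edge_src e1) r23) step; rewrite /= mmul1l.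
- apply: (@run_step_eq _ _ prod_automaton (prod_stepl (e1, q2))) (IH _ _ r2) => //=;
    rewrite ?Ee1 ?mmul1l //.
  by apply/in_prod_edges; apply: Or31; exists e1, q2.
Qed.

Lemma prod_automatonP w :
  accepts prod_automaton w <-> accepts A1 w /\ accepts A2 w.
Proof.
rewrite !acceptsE; split=> [[q /andP[f1 f2] /prod_run_sound[r1 r2]]|[[q1 f1 r1] [q2 f2 r2]]].
  by split; [exists q.1|exists q.2].
by exists (q1, q2); [apply/andP|exact: prod_run_complete r1 r2].
Qed.

End ProductAutomaton.

Lemma in_FM_prod (M1 M2 : monoidT) (S : finType) (L1 L2 : language S) :
  in_FM M1 L1 -> in_FM M2 L2 -> in_FM (prod_monoid M1 M2) (fun w => L1 w /\ L2 w).
Proof.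
move=> [A1 HA1] [A2 HA2]; exists (prod_automaton A1 A2) => w.
by rewrite prod_automatonP -HA1 -HA2.
Qed.

Section Simulation.
Variables (M N : monoidT) (X : finType) (x : X -> N).
Hypothesis x_onto : forall n : N, exists w, mprod (map x w) = n.
Variables (B : automaton M X) (S : finType) (P : automaton N S).
Local Notation EB := (astate B * M * option X * astate B)%type.
Local Notation EP := (astate P * N * option S * astate P)%type.

Definition gen_word (n : N) : seq X :=
  proj1_sig (constructive_indefinite_description _ (x_onto n)).

Lemma gen_wordP n : mprod (map x (gen_word n)) = n.
Proof. exact: proj2_sig (constructive_indefinite_description _ (x_onto n)). Qed.

Local Notation edge_words := [seq gen_word (edge_mon e) | e <- aedges P].

Definition pending_words : seq (seq X) :=
  [::] :: [seq drop k w | w <- edge_words, k <- iota 0 (size w)].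

Lemma pending_words_drop w k : w \in edge_words -> drop k w \in pending_words.
Proof.
move=> ew; case: (ltnP k (size w)) => [lt_k|le_k]; last by rewrite drop_oversize ?mem_head.
by rewrite inE; apply/orP; right; apply: allpairs_f_dep; rewrite // mem_iota.
Qed.

Lemma pending_words_behead s : s \in pending_words -> behead s \in pending_words.
Proof.
rewrite inE => /orP[/eqP-> //|/allpairsPdep[w [k [ew _ ->]]]].
by rewrite -drop1 drop_drop; apply: pending_words_drop.
Qed.

Definition pending : finType := seq_sub pending_words.
Definition pending_nil : pending := SeqSub (mem_head [::] _).
Definition pending_behead (u : pending) : pending := insubd pending_nil (behead (val u)).
Definition pending_word (e : EP) : pending := insubd pending_nil (gen_word (edge_mon e)).

Lemma val_pending_behead u : val (pending_behead u) = behead (val u).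
Proof. by rewrite insubdK //; apply: pending_words_behead (valP u). Qed.

Lemma val_pending_word e : List.In e (aedges P) -> val (pending_word e) = gen_word (edge_mon e).
Proof.
move=> Pe; rewrite insubdK // -[gen_word _]drop0; apply: pending_words_drop.
elim: (aedges P) Pe => [//|e' s IHs] /= [->|/IHs]; rewrite inE ?eqxx // => ->.
by rewrite orbT.
Qed.

Definition feed (o : option X) (u : pending) : option pending :=
  if o is Some a then
    if ohead (val u) == Some a then Some (pending_behead u) else None
  else Some u.

Lemma feed_Some o u u' : feed o u = Some u' -> val u = ocons o (val u').
Proof.
case: o => [a|[<-]] //=; case: ifP => // /eqP head_u [<-].
by rewrite val_pending_behead; case: u head_u => -[|b s] //= _ [->].
Qed.

Lemma feed_ocons o u s : val u = ocons o s -> exists2 u', feed o u = Some u' & val u' = s.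
Proof.
case: o => [a|] Eu; last by exists u.
by exists (pending_behead u); rewrite ?val_pending_behead /feed Eu /= ?eqxx.
Qed.

(* The last component is the part of the word of the current edge of [P] that
   [B] has not read yet. *)
Definition sim_state : finType := (astate P * astate B * pending)%type.
Local Notation sim_edge := (sim_state * M * option S * sim_state)%type.

Definition sim_stepB (c : sim_state * (EB * pending)) : sim_edge :=
  let: (z, (eB, u)) := c in (z, edge_mon eB, None, (z.1.1, edge_tgt eB, u)).

Definition sim_stepP (c : sim_state * EP) : sim_edge :=
  let: (z, eP) := c in
  (z, mone M, edge_let eP, (edge_tgt eP, z.1.2, pending_word eP)).

Definition sim_edges : seq sim_edge :=
  [seq sim_stepB c
  | c <- List.list_prod (enum sim_state) (List.list_prod (aedges B) (enum pending))
  & let: (z, (eB, u)) := c in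
    (edge_src eB == z.1.2) && (feed (edge_let eB) z.2 == Some u)]
  ++ [seq sim_stepP c | c <- List.list_prod (enum sim_state) (aedges P)
                      & let: (z, eP) := c in (val z.2 == [::]) && (edge_src eP == z.1.1)].

Definition sim_automaton : automaton M S :=
  @Build_automaton M S sim_state sim_edges (ainit P, ainit B, pending_nil)
    (fun z => [&& afinal z.1.1, afinal z.1.2 & val z.2 == [::]]).

Lemma in_sim_edges e : List.In e sim_edges <->
  (exists z eB u, [/\ List.In eB (aedges B), edge_src eB = z.1.2,
                      feed (edge_let eB) z.2 = Some u & e = sim_stepB (z, (eB, u))])
  \/ (exists z eP, [/\ List.In eP (aedges P), val z.2 = [::], edge_src eP = z.1.1
                     & e = sim_stepP (z, eP)]).
Proof.
rewrite List.in_app_iff !In_map; split.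
- case=> -[[z c] /In_filter[/List.in_prod_iff[_ Ac]]].
    case: c Ac => eB u /List.in_prod_iff[AeB _] /andP[/eqP Es /eqP Ef] ->.
    by left; exists z, eB, u.
  by move=> /andP[/eqP Ez /eqP Es] ->; right; exists z, c.
- case=> [[z [eB [u [AeB Es Ef ->]]]]|[z [eP [AeP Ez Es ->]]]]; [left|right].
    exists (z, (eB, u)) => //; apply/In_filter; rewrite /= Es Ef !eqxx; split=> //.
    apply/List.in_prod_iff; split; first exact: In_enum.
    by apply/List.in_prod_iff; split; last exact: In_enum.
  exists (z, eP) => //; apply/In_filter; rewrite /= Es Ez !eqxx; split=> //.
  by apply/List.in_prod_iff; split; first exact: In_enum.
Qed.

Lemma sim_run_sound z w m z' : run sim_automaton z w m z' -> val z'.2 = [::] ->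
  exists v, run P z.1.1 w (mprod (map x v)) z'.1.1 /\ run B z.1.2 (val z.2 ++ v) m z'.1.2.
Proof.
elim=> [z0|e w0 m0 z0 /in_sim_edges Ae _ IH] nil_z0.
  by exists [::]; rewrite nil_z0; split; exact: run_nil.
have [v [rP rB]] := IH nil_z0.
case: Ae => [[y [eB [u [AeB Es Ef ->]]]]|[y [eP [AeP Ey Es ->]]]] /= in rP rB *.
- exists v; split=> //; rewrite (feed_Some Ef) ocons_cat.
  exact: run_step_eq AeB Es _ _ rB.
- exists (val (pending_word eP) ++ v); rewrite Ey mmul1l; split; last exact: rB.
  apply: (run_step_eq AeP Es _ _ rP) => //.
  by rewrite map_cat mprod_cat val_pending_word ?gen_wordP.
Qed.

Lemma sim_run_feed p b u m b' : run B b (val u) m b' ->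
  run sim_automaton (p, b, u) [::] m (p, b', pending_nil).
Proof.
move Ew: (val u) => w r; elim: r u Ew => [q|e w0 m0 q Ae _ IH] u Eu.
  by rewrite (_ : u = pending_nil); [exact: run_nil|apply: val_inj].
have [u' Ef Eu'] := feed_ocons Eu.
apply: (@run_step_eq _ _ sim_automaton (sim_stepB ((p, edge_src e, u), (e, u'))))
  (IH _ Eu') => //=.
by apply/in_sim_edges; left; exists (p, edge_src e, u), e, u'.
Qed.

Lemma sim_run_complete p w n p' : run P p w n p' ->
  exists2 v, mprod (map x v) = n & forall b m b', run B b v m b' ->
    run sim_automaton (p, b, pending_nil) w m (p', b', pending_nil).
Proof.
elim=> [q|eP w0 n0 q AeP _ [v Ev sim_v]].
  by exists [::] => // b m b'; exact: (@sim_run_feed q b pending_nil m b').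
exists (gen_word (edge_mon eP) ++ v); first by rewrite map_cat mprod_cat gen_wordP Ev.
move=> b m b' /run_split[b1 [m1 [m2 [r1 r2 ->]]]].
rewrite -(val_pending_word AeP) in r1.
have := run_cat (sim_run_feed (edge_tgt eP) r1) (sim_v _ _ _ r2).
apply: (@run_step_eq _ _ sim_automaton (sim_stepP ((edge_src eP, b, pending_nil), eP)))
  => //=.
  by apply/in_sim_edges; right; exists (edge_src eP, b, pending_nil), eP.
by rewrite mmul1l.
Qed.

Hypothesis B_identity : forall v, mprod (map x v) = mone N <-> accepts B v.

Lemma sim_automatonP w : accepts sim_automaton w <-> accepts P w.
Proof.
rewrite !acceptsE; split.
  move=> [z /and3P[fP fB /eqP nil_z] /sim_run_sound/(_ nil_z)[v [rP rB]]].
  have /B_identity Ev : accepts B v by apply/acceptsE; exists z.1.2.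
  by exists z.1.1; rewrite -?Ev.
move=> [p fp /sim_run_complete[v /B_identity/acceptsE[b fb rB] sim_v]].
by exists (p, b, pending_nil); [apply/and3P|exact: sim_v].
Qed.

End Simulation.

Lemma in_FM_transfer (M N : monoidT) (X : finType) (x : X -> N) :
  (forall n : N, exists w, mprod (map x w) = n) ->
  in_FM M (fun w => mprod (map x w) = mone N) ->
  forall (S : finType) (L : language S), in_FM N L -> in_FM M L.
Proof.
move=> x_onto [B HB] S L [P HP]; exists (sim_automaton x_onto B P) => w.
by rewrite sim_automatonP ?HP.
Qed.

Theorem corollary3p6 (M : monoidT) (X : finType) (x : X -> M * M) :
  finitely_generated M -> generates_MM x ->
  (FM_closed_under_intersection M <->
   exists A : automaton M X, forall w, identity_language x w <-> accepts A w).
Proof.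
move=> _ [_ x_onto]; split=> [closed | idFM S L1 L2 FM1 FM2].
  have [A HA] := closed X _ _ (in_FM_kernel (fst \o x)) (in_FM_kernel (snd \o x)).
  exists A => w; apply: iff_trans (HA w); rewrite (map_comp fst x) (map_comp snd x).
  exact: (@mprod_pair_eq1 M M (map x w)).
exact: (in_FM_transfer (N := prod_monoid M M) x_onto idFM (in_FM_prod FM1 FM2)).
Qed.
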